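(* Let $\{X_\sigma,\pi^\sigma_\varrho,\Sigma\}$ be an inverse system of topological spaces such that all bonding maps $\pi^\sigma_\varrho$ are skeletal and all limit projections $\pi_\sigma:\varprojlim\{X_\sigma,\pi^\sigma_\varrho,\Sigma\}\to X_\sigma$ are onto. Then every projection $\pi_\sigma$ is skeletal.
   Context: A continuous surjection $f:X\to Y$ is skeletal if for every non-empty open $U\subseteq X$ the closure of $f[U]$ has non-empty interior. *)

From HB Require Import structures.
From mathcomp Require Import all_boot all_order all_algebra.
From mathcomp Require Import all_classical topology.
Set Implicit Arguments. Unset Strict Implicit. Unset Printing Implicit Defensive.
Import Order.TTheory.
Local Open Scope classical_set_scope.
Local Open Scope order_scope.

Definition skeletal {X Y : topologicalType} (f : X -> Y) : Prop :=
  continuous f /\ (forall y : Y, exists x : X, f x = y) /\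
  (forall U : set X, open U -> U !=set0 ->
     (interior (closure (f @` U))) !=set0).

Definition directed {d : Order.disp_t} (I : porderType d) : Prop :=
  forall a b : I, exists c : I, a <= c /\ b <= c.

(* Inverse system {X_s, pi^s_r, I}: pi s r : X s -> X r is the bonding map
   pi^s_r, meaningful only for r <= s (its values for other pairs are
   irrelevant). *)
Definition inverse_system {d : Order.disp_t} {I : porderType d}
  (X : I -> topologicalType) (pi : forall s r : I, X s -> X r) : Prop :=
  (forall s : I, forall x : X s, pi s s x = x) /\
  (forall r s t : I, r <= s -> s <= t -> forall x : X t,
      pi s r (pi t s x) = pi t r x) /\
  (forall r s : I, r <= s -> continuous (pi s r)).

Definition invlim_set {d : Order.disp_t} {I : porderType d}
  (X : I -> topologicalType) (pi : forall s r : I, X s -> X r)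
  : set (prod_topology X) :=
  [set x | forall r s : I, r <= s -> pi s r (x s) = x r].

(* The inverse limit, with the subspace topology of the product topology
   (mathcomp-analysis's topology on set_type = initial topology of the
   inclusion). *)
Definition invlim {d : Order.disp_t} {I : porderType d}
  (X : I -> topologicalType) (pi : forall s r : I, X s -> X r)
  : topologicalType := set_type (invlim_set pi).

Definition invlim_proj {d : Order.disp_t} {I : porderType d}
  (X : I -> topologicalType) (pi : forall s r : I, X s -> X r) (s : I)
  : invlim pi -> X s := fun x => (set_val x : prod_topology X) s.
Arguments invlim_proj {d I X} pi s _.

(* A non-empty open set U of the limit contains a basic open set
   pi_t^-1(V), and by directedness we may take t above s. Since pi_t is onto,
   pi_s maps pi_t^-1(V) onto pi^t_s(V), so pi_s(U) contains the image of a
   non-empty open set under the skeletal bonding map pi^t_s. *)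
From HB Require Import structures.
From mathcomp Require Import all_boot all_order all_algebra.
From mathcomp Require Import all_classical topology.
Import Order.TTheory.
Local Open Scope classical_set_scope.
Local Open Scope order_scope.

Section InverseLimit.
Context (d : Order.disp_t) (I : porderType d)
  (X : I -> topologicalType) (pi : forall s r : I, X s -> X r).

Lemma invlim_proj_compat (x : invlim pi) r t : r <= t ->
  pi t r (invlim_proj pi t x) = invlim_proj pi r x.
Proof. by case: x => v vlim rt; exact: (set_mem vlim). Qed.

Lemma invlim_proj_continuous s : continuous (invlim_proj pi s).
Proof.
move=> x; apply: (@continuous_comp _ _ _ set_val (fun f : prod_topology X => f s)).
  exact: initial_continuous.
exact: proj_continuous.
Qed.

Lemma image_invlim_proj_preimage r t (W : set (X t)) :
  r <= t -> (forall y : X t, exists x : invlim pi, invlim_proj pi t x = y) ->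
  invlim_proj pi r @` (invlim_proj pi t @^-1` W) = pi t r @` W.
Proof.
move=> rt surj; apply/seteqP; split=> _ [x Wx <-].
  by exists (invlim_proj pi t x); rewrite ?invlim_proj_compat.
have [z zx] := surj x.
by exists z; rewrite /= ?zx // -zx invlim_proj_compat.
Qed.

Hypotheses (dirI : directed I) (isys : inverse_system pi).

Definition invlim_cylinder (p : {t : I & set (X t)}) : set (invlim pi) :=
  invlim_proj pi (projT1 p) @^-1` projT2 p.

Definition open_cylinder_index (x : invlim pi) : set {t : I & set (X t)} :=
  [set p : {t : I & set (X t)} | open (projT2 p) /\ projT2 p (invlim_proj pi (projT1 p) x)].

Lemma invlim_cylinder_filter (s0 : I) (x : invlim pi) :
  Filter (filter_from (open_cylinder_index x) invlim_cylinder).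
Proof.
have [_ [_ pi_cont]] := isys.
apply: filter_from_filter.
  by exists (existT _ s0 setT); split => //; exact: openT.
move=> [t1 V1] [t2 V2] [/= oV1 V1x] [/= oV2 V2x].
have [t [le1 le2]] := dirI t1 t2.
have pi_open_preimage r (V : set (X r)) : r <= t -> open V -> open (pi t r @^-1` V).
  by move=> rt oV; apply: open_comp => // y _; exact: pi_cont.
exists (existT _ t (pi t t1 @^-1` V1 `&` pi t t2 @^-1` V2)).
  split => /=; first by apply: openI; exact: pi_open_preimage.
  by split; rewrite /= invlim_proj_compat.
move=> y [/= V1y V2y]; rewrite /invlim_cylinder /=.
by split; [rewrite -(invlim_proj_compat y _ _ le1)|rewrite -(invlim_proj_compat y _ _ le2)].
Qed.

(* With a directed index set the cylinders over single coordinates already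
   form a neighbourhood base of the limit. *)
Lemma invlim_nbhs_cylinder (s0 : I) (x : invlim pi) (A : set (invlim pi)) :
  nbhs x A -> exists t (V : set (X t)),
    [/\ open V, V (invlim_proj pi t x) & invlim_proj pi t @^-1` V `<=` A].
Proof.
rewrite nbhsE => -[B [[C oC <-] Bx BA]].
have F := invlim_cylinder_filter s0 x.
suff : filter_from (open_cylinder_index x) invlim_cylinder A.
  by move=> [[t V] [oV Vx] VA]; exists t, V.
apply: (@filterS _ _ F _ _ BA).
have cvg_val : set_val @ filter_from (open_cylinder_index x) invlim_cylinder
               --> (set_val x : prod_topology X).
  apply/(@cvg_sup (forall i, X i) I (fun i => Topological.class
    (initial_topology (fun f : (forall i, X i) => f i)))).
  move=> i U.
  rewrite (@nbhsE (initial_topology (fun f : (forall i, X i) => f i))).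
  move=> -[B' [[C' oC' <-] B'x B'U]].
  by exists (existT _ i C') => // y /= Cy; apply: B'U.
by apply: cvg_val; apply: open_nbhs_nbhs.
Qed.

End InverseLimit.

Arguments invlim_proj_compat {d I X pi} x {r t}.
Arguments image_invlim_proj_preimage {d I X pi r t} W.
Arguments invlim_nbhs_cylinder {d I X pi}.

Theorem proposition3 (d : Order.disp_t) (I : porderType d)
  (X : I -> topologicalType) (pi : forall s r : I, X s -> X r) :
  directed I ->
  inverse_system pi ->
  (forall r s : I, r <= s -> skeletal (pi s r)) ->
  (forall s : I, forall y : X s, exists x : invlim pi, invlim_proj pi s x = y) ->
  forall s : I, skeletal (invlim_proj pi s).
Proof.
move=> dirI isys skel surj s.
split; first exact: invlim_proj_continuous.
split; first exact: surj.
move=> U oU [x Ux].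
have [t [V [oV Vx VU]]] :=
  invlim_nbhs_cylinder dirI isys s _ _ (open_nbhs_nbhs (conj oU Ux)).
have [u [su tu]] := dirI s t.
have [_ [_ pi_cont]] := isys.
have oW : open (pi u t @^-1` V) by apply: open_comp => // y _; exact: pi_cont.
have Wx : (pi u t @^-1` V) (invlim_proj pi u x) by rewrite /= invlim_proj_compat.
have [y Wy] := (skel s u su).2.2 _ oW (ex_intro _ _ Wx).
exists y; move: Wy; apply: interiorS; apply: closureS.
rewrite -(image_invlim_proj_preimage _ su (surj u)); apply: image_subset.
by move=> z Wz; apply: VU; move: Wz; rewrite /= invlim_proj_compat.
Qed.
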